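(* Let $C$ be an arbitrary quasi-copula and let $C^\sigma$ denote either of its reflections $C^\sigma(x,y)=y-C(1-x,y)$ or $C^\sigma(x,y)=x-C(x,1-y)$ (the same choice of reflection used throughout). Then $(C^\sigma)_M=(C_O)^\sigma$ and $(C^\sigma)_O=(C_M)^\sigma$.
   Context: For a quasi-copula $Q$ on $[0,1]^2$ and $\mathbf{x}=(x_1,x_2)\in[0,1]^2$ define the sets of (possibly degenerate) rectangles $[s_1,s_2]\times[t_1,t_2]\subseteq[0,1]^2$: $\mathcal{R}_\nearrow(\mathbf{x})$ those with southwest corner $\mathbf{x}$; $\mathcal{R}_\swarrow(\mathbf{x})$ those with northeast corner $\mathbf{x}$; $\mathcal{R}_\nwarrow(\mathbf{x})$ those with southeast corner $\mathbf{x}$; $\mathcal{R}_\searrow(\mathbf{x})$ those with northwest corner $\mathbf{x}$. With $V_Q([s_1,s_2]\times[t_1,t_2])=Q(s_1,t_1)+Q(s_2,t_2)-Q(s_2,t_1)-Q(s_1,t_2)$, the defects are $D^Q_{\bullet}(\mathbf{x})=\inf\{V_Q(R):R\in\mathcal{R}_\bullet(\mathbf{x})\}\le0$ for $\bullet\in\{\nearrow,\swarrow,\nwarrow,\searrow\}$, $D^Q_M=\min(D^Q_\nearrow,D^Q_\swarrow)$, $D^Q_O=\min(D^Q_\nwarrow,D^Q_\searrow)$, and $Q_M=Q-D^Q_M$, $Q_O=Q+D^Q_O$ (these are quasi-copulas with $Q_O\le Q\le Q_M$). A quasi-copula is a function $[0,1]^2\to\mathbb{R}$ that is grounded ($Q(x,0)=Q(0,y)=0$),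 has neutral element 1 ($Q(x,1)=x$, $Q(1,y)=y$), and has $V_Q(R)\ge0$ for every rectangle $R\subseteq[0,1]^2$ having a side on the boundary of $[0,1]^2$. *)

From Stdlib Require Import Reals Lra ClassicalEpsilon.
Open Scope R_scope.

Definition is_lower_bound (P : R -> Prop) (m : R) : Prop :=
  forall x, P x -> m <= x.
Definition is_glb (P : R -> Prop) (m : R) : Prop :=
  is_lower_bound P m /\ (forall b, is_lower_bound P b -> b <= m).
Definition Rinf (P : R -> Prop) : R :=
  epsilon (inhabits 0) (fun m => is_glb P m).

Definition in01 (x : R) : Prop := 0 <= x <= 1.

Definition VQ (Q : R -> R -> R) (s1 s2 t1 t2 : R) : R :=
  Q s1 t1 + Q s2 t2 - Q s2 t1 - Q s1 t2.

Definition is_rect (s1 s2 t1 t2 : R) : Prop :=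
  0 <= s1 /\ s1 <= s2 /\ s2 <= 1 /\ 0 <= t1 /\ t1 <= t2 /\ t2 <= 1.

Definition quasi_copula (Q : R -> R -> R) : Prop :=
  (forall x, in01 x -> Q x 0 = 0 /\ Q 0 x = 0) /\
  (forall x, in01 x -> Q x 1 = x /\ Q 1 x = x) /\
  (forall s1 s2 t1 t2, is_rect s1 s2 t1 t2 ->
     (s1 = 0 \/ s2 = 1 \/ t1 = 0 \/ t2 = 1) -> 0 <= VQ Q s1 s2 t1 t2).

Definition D_ne (Q : R -> R -> R) (x1 x2 : R) : R :=
  Rinf (fun v => exists s1 s2 t1 t2, is_rect s1 s2 t1 t2 /\
          s1 = x1 /\ t1 = x2 /\ v = VQ Q s1 s2 t1 t2).
Definition D_sw (Q : R -> R -> R) (x1 x2 : R) : R :=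
  Rinf (fun v => exists s1 s2 t1 t2, is_rect s1 s2 t1 t2 /\
          s2 = x1 /\ t2 = x2 /\ v = VQ Q s1 s2 t1 t2).
Definition D_nw (Q : R -> R -> R) (x1 x2 : R) : R :=
  Rinf (fun v => exists s1 s2 t1 t2, is_rect s1 s2 t1 t2 /\
          s2 = x1 /\ t1 = x2 /\ v = VQ Q s1 s2 t1 t2).
Definition D_se (Q : R -> R -> R) (x1 x2 : R) : R :=
  Rinf (fun v => exists s1 s2 t1 t2, is_rect s1 s2 t1 t2 /\
          s1 = x1 /\ t2 = x2 /\ v = VQ Q s1 s2 t1 t2).

Definition D_M (Q : R -> R -> R) (x1 x2 : R) : R := Rmin (D_ne Q x1 x2) (D_sw Q x1 x2).
Definition D_O (Q : R -> R -> R) (x1 x2 : R) : R := Rmin (D_nw Q x1 x2) (D_se Q x1 x2).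

Definition Q_M (Q : R -> R -> R) : R -> R -> R := fun x y => Q x y - D_M Q x y.
Definition Q_O (Q : R -> R -> R) : R -> R -> R := fun x y => Q x y + D_O Q x y.

Definition refl1 (C : R -> R -> R) : R -> R -> R := fun x y => y - C (1 - x) y.
Definition refl2 (C : R -> R -> R) : R -> R -> R := fun x y => x - C x (1 - y).

(* Volumes transform by flipping the rectangle: V_{refl1 C}([s1,s2]x[t1,t2])
   equals V_C([1-s2,1-s1]x[t1,t2]), and similarly in the second variable.
   A horizontal flip exchanges the "west" and "east" corners of a rectangle,
   a vertical flip the "south" and "north" ones, so it maps the classes
   R_ne, R_sw, R_nw, R_se at a point onto R_nw, R_se, R_ne, R_sw (resp.
   R_se, R_nw, R_sw, R_ne) at the reflected point.  Hence each defect of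
   the reflection is the "opposite" defect of C at the reflected point:
   D_M (C^sigma) = D_O C o sigma and D_O (C^sigma) = D_M C o sigma, and the
   theorem follows by unfolding Q_M, Q_O and the reflection. *)
From Stdlib Require Import Reals Lra FunctionalExtensionality PropExtensionality.
Open Scope R_scope.

Definition rect_inf (Q : R -> R -> R) (P : R -> R -> R -> R -> Prop) : R :=
  Rinf (fun v => exists s1 s2 t1 t2,
          is_rect s1 s2 t1 t2 /\ P s1 s2 t1 t2 /\ v = VQ Q s1 s2 t1 t2).

Lemma Rinf_ext (P P' : R -> Prop) : (forall v, P v <-> P' v) -> Rinf P = Rinf P'.
Proof.
  intro HPP'. replace P' with P; [reflexivity |].
  apply functional_extensionality; intro v.
  apply propositional_extensionality; apply HPP'.
Qed.

Lemma rect_inf_ext (Q : R -> R -> R) (P P' : R -> R -> R -> R -> Prop) :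
  (forall s1 s2 t1 t2, P s1 s2 t1 t2 <-> P' s1 s2 t1 t2) ->
  rect_inf Q P = rect_inf Q P'.
Proof.
  intro HPP'. unfold rect_inf. apply Rinf_ext; intro v.
  split; intros (s1 & s2 & t1 & t2 & Hr & HP & Hv);
    exists s1, s2, t1, t2; (split; [exact Hr | split; [apply HPP'; exact HP | exact Hv]]).
Qed.

Lemma VQ_refl1 (C : R -> R -> R) (s1 s2 t1 t2 : R) :
  VQ (refl1 C) s1 s2 t1 t2 = VQ C (1 - s2) (1 - s1) t1 t2.
Proof. unfold VQ, refl1. ring. Qed.

Lemma VQ_refl2 (C : R -> R -> R) (s1 s2 t1 t2 : R) :
  VQ (refl2 C) s1 s2 t1 t2 = VQ C s1 s2 (1 - t2) (1 - t1).
Proof. unfold VQ, refl2. ring. Qed.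

Lemma one_minus_involutive (a : R) : 1 - (1 - a) = a.
Proof. ring. Qed.

(* Flipping rectangles horizontally is an involution of the rectangles of
   [0,1]^2, so infima of volumes of refl1 C are infima for C over the
   flipped class. *)
Lemma rect_inf_refl1 (C : R -> R -> R) (P : R -> R -> R -> R -> Prop) :
  rect_inf (refl1 C) P =
  rect_inf C (fun s1 s2 t1 t2 => P (1 - s2) (1 - s1) t1 t2).
Proof.
  unfold rect_inf. apply Rinf_ext; intro v.
  split; intros (s1 & s2 & t1 & t2 & Hr & HP & ->);
    exists (1 - s2), (1 - s1), t1, t2; unfold is_rect in *;
    rewrite VQ_refl1, !one_minus_involutive;
    repeat split; try lra; assumption.
Qed.

Lemma rect_inf_refl2 (C : R -> R -> R) (P : R -> R -> R -> R -> Prop) :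
  rect_inf (refl2 C) P =
  rect_inf C (fun s1 s2 t1 t2 => P s1 s2 (1 - t2) (1 - t1)).
Proof.
  unfold rect_inf. apply Rinf_ext; intro v.
  split; intros (s1 & s2 & t1 & t2 & Hr & HP & ->);
    exists s1, s2, (1 - t2), (1 - t1); unfold is_rect in *;
    rewrite VQ_refl2, !one_minus_involutive;
    repeat split; try lra; assumption.
Qed.

(* The defining sets of the defects and of [rect_inf] differ only by the
   bracketing of a conjunction. *)
Ltac corner_reassoc :=
  intro v; split; intros (s1 & s2 & t1 & t2 & H);
  exists s1, s2, t1, t2; tauto.

Lemma D_ne_rect_inf (Q : R -> R -> R) (x y : R) :
  D_ne Q x y = rect_inf Q (fun s1 _ t1 _ => s1 = x /\ t1 = y).
Proof. unfold D_ne, rect_inf. apply Rinf_ext; corner_reassoc. Qed.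

Lemma D_sw_rect_inf (Q : R -> R -> R) (x y : R) :
  D_sw Q x y = rect_inf Q (fun _ s2 _ t2 => s2 = x /\ t2 = y).
Proof. unfold D_sw, rect_inf. apply Rinf_ext; corner_reassoc. Qed.

Lemma D_nw_rect_inf (Q : R -> R -> R) (x y : R) :
  D_nw Q x y = rect_inf Q (fun _ s2 t1 _ => s2 = x /\ t1 = y).
Proof. unfold D_nw, rect_inf. apply Rinf_ext; corner_reassoc. Qed.

Lemma D_se_rect_inf (Q : R -> R -> R) (x y : R) :
  D_se Q x y = rect_inf Q (fun s1 _ _ t2 => s1 = x /\ t2 = y).
Proof. unfold D_se, rect_inf. apply Rinf_ext; corner_reassoc. Qed.

Ltac defects_as_rect_inf :=
  rewrite ?D_ne_rect_inf, ?D_sw_rect_inf, ?D_nw_rect_inf, ?D_se_rect_inf.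

(* A horizontal flip exchanges west and east corners: the M-defect of
   refl1 C is the O-defect of C at the reflected point, and conversely. *)
Lemma D_M_refl1 (C : R -> R -> R) (x y : R) :
  D_M (refl1 C) x y = D_O C (1 - x) y.
Proof.
  unfold D_M, D_O. defects_as_rect_inf. rewrite !rect_inf_refl1.
  f_equal; apply rect_inf_ext; intros; lra.
Qed.

Lemma D_O_refl1 (C : R -> R -> R) (x y : R) :
  D_O (refl1 C) x y = D_M C (1 - x) y.
Proof.
  unfold D_M, D_O. defects_as_rect_inf. rewrite !rect_inf_refl1.
  f_equal; apply rect_inf_ext; intros; lra.
Qed.

(* A vertical flip exchanges south and north corners; here the roles of the
   two defects inside the minimum are swapped as well. *)
Lemma D_M_refl2 (C : R -> R -> R) (x y : R) :
  D_M (refl2 C) x y = D_O C x (1 - y).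
Proof.
  unfold D_M, D_O. rewrite Rmin_comm. defects_as_rect_inf.
  rewrite !rect_inf_refl2. f_equal; apply rect_inf_ext; intros; lra.
Qed.

Lemma D_O_refl2 (C : R -> R -> R) (x y : R) :
  D_O (refl2 C) x y = D_M C x (1 - y).
Proof.
  unfold D_M, D_O. rewrite Rmin_comm. defects_as_rect_inf.
  rewrite !rect_inf_refl2. f_equal; apply rect_inf_ext; intros; lra.
Qed.

Theorem mainTheorem6 (C : R -> R -> R) (sigma : (R -> R -> R) -> (R -> R -> R)) :
  quasi_copula C ->
  (sigma = refl1 \/ sigma = refl2) ->
  (forall x y, in01 x -> in01 y ->
     Q_M (sigma C) x y = sigma (Q_O C) x y) /\
  (forall x y, in01 x -> in01 y ->
     Q_O (sigma C) x y = sigma (Q_M C) x y).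
Proof.
  intros _ [-> | ->]; split; intros x y _ _; unfold Q_M, Q_O.
  - rewrite D_M_refl1. unfold refl1. ring.
  - rewrite D_O_refl1. unfold refl1. ring.
  - rewrite D_M_refl2. unfold refl2. ring.
  - rewrite D_O_refl2. unfold refl2. ring.
Qed.
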